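(* Let $n$ be odd. Then there exist $p\in\mathcal{P}$ and a $2n$-cycle $\varphi\in G^*$ such that $\mathrm{Stab}_{G^*}(p)=\langle\varphi\rangle$ and $\mathrm{Rank}_{p(z)}(\varphi^n(z))=n$ for every $z\in I$.
   Context: Fix $n\ge 2$, $W=\{1,\dots,n\}$, $M=\{n+1,\dots,2n\}$, $I=W\cup M$. Permutations compose right-to-left. A preference profile is a function $p$ on $I$ assigning to each $x\in W$ a linear order $p(x)$ on $M$ and to each $y\in M$ a linear order $p(y)$ on $W$; $\mathcal{P}$ is the set of preference profiles. For a linear order $R$ on $X$ and $a\in X$, $\mathrm{Rank}_R(a)=|\{b\in X:b\succeq_R a\}|$. $G^*=\{\varphi\in\mathrm{Sym}(I):\{\varphi(W),\varphi(M)\}=\{W,M\}\}$. For a linear order $R$ on $X\subseteq I$ and $\varphi\in\mathrm{Sym}(I)$, $\varphi R$ is the relation on $\varphi(X)$ with $(a,b)\in\varphi R$ iff $(\varphi^{-1}(a),\varphi^{-1}(b))\in R$. For $\varphi\in G^*$, $p^\varphi(z)=\varphi\,p(\varphi^{-1}(z))$, and $\mathrm{Stab}_{G^*}(p)=\{\varphi\in G^*:p^\varphi=p\}$. *)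

From mathcomp Require Import all_boot all_fingroup.
Set Implicit Arguments.
Unset Strict Implicit.
Unset Printing Implicit Defensive.
Import GroupScope.

(* Agents I = {1..2n} are modelled as 'I_(2*n) = {0..2n-1}:
   W = {0..n-1} (paper's {1..n}), M = {n..2n-1} (paper's {n+1..2n}). *)
Definition agent (n : nat) := 'I_(2 * n).

Definition Wset (n : nat) : {set agent n} := [set i : agent n | (i < n)%N].
Definition Mset (n : nat) : {set agent n} := [set i : agent n | (n <= i)%N].

(* A binary relation on I is a finite set of pairs; (a, b) \in R means a R b,
   i.e. a is weakly preferred to b (a >=_R b). *)
Definition relI (n : nat) := {set agent n * agent n}.

Definition linear_order_on (n : nat) (X : {set agent n}) (R : relI n) : Prop :=
  [/\ R \subset setX X X,
      (forall a, a \in X -> (a, a) \in R),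
      (forall a b, (a, b) \in R -> (b, a) \in R -> a = b),
      (forall a b c, (a, b) \in R -> (b, c) \in R -> (a, c) \in R) &
      (forall a b, a \in X -> b \in X -> ((a, b) \in R) || ((b, a) \in R))].

Definition profile (n : nat) := {ffun agent n -> relI n}.

Definition is_profile (n : nat) (p : profile n) : Prop :=
  (forall x, x \in Wset n -> linear_order_on (Mset n) (p x)) /\
  (forall y, y \in Mset n -> linear_order_on (Wset n) (p y)).

Definition Rank (n : nat) (R : relI n) (a : agent n) : nat :=
  #|[set b : agent n | (b, a) \in R]|.

Definition Gstar (n : nat) : {set {perm agent n}} :=
  [set phi : {perm agent n} |
     [set phi @: Wset n; phi @: Mset n] == [set Wset n; Mset n]].

Definition act_rel (n : nat) (phi : {perm agent n}) (R : relI n) : relI n :=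
  [set ab : agent n * agent n | ((phi^-1) ab.1, (phi^-1) ab.2) \in R].

Definition act_profile (n : nat) (p : profile n) (phi : {perm agent n})
  : profile n :=
  [ffun z => act_rel phi (p ((phi^-1) z))].

Definition Stab (n : nat) (p : profile n) : {set {perm agent n}} :=
  [set phi in Gstar n | act_profile p phi == p].

Definition is_kcycle (T : finType) (k : nat) (phi : {perm T}) : Prop :=
  exists x, #|porbit phi x| = k /\ (forall y, y \notin porbit phi x -> phi y = y).

From mathcomp Require Import all_boot all_fingroup.
From mathcomp Require Import zify.
Set Implicit Arguments.
Unset Strict Implicit.
Unset Printing Implicit Defensive.

(* Place the 2n agents on a cycle alternating between the sides,
   w_0, m_0, w_1, m_1, ..., and let phi be the rotation by one step: a
   2n-cycle exchanging W and M.  Agent z ranks the agents of the other side,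
   i.e. those at odd clockwise offset d from z, by increasing d, except that
   the diametrically opposite agent phi^n z (offset n, odd because n is odd)
   comes last, so its rank is n.  Rotations preserve offsets, hence fix the
   profile.  Conversely z's first choice is phi z (offset 1, as n >= 2), so
   any psi fixing the profile satisfies psi (phi z) = phi (psi z), and a
   permutation commuting with a full cycle is a power of it. *)

Section FullCycle.
Variables (T : finType) (s : {perm T}) (x : T).
Hypothesis s_full : porbit s x = setT.

Lemma full_cycle_kcycle : is_kcycle #|T| s.
Proof. by exists x; rewrite s_full cardsT; split=> // y; rewrite inE. Qed.

Lemma commute_full_cycle (t : {perm T}) : commute t s -> t \in <[s]>%g.
Proof.
move=> cts; have orbit_s y : exists k, y = (s ^+ k)%g x.
  by apply/porbitP; rewrite s_full inE.
have [k tx] := orbit_s (t x).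
apply/cycleP; exists k; apply/permP => a; have [j ->] := orbit_s a.
by rewrite -permM -(commuteX j cts) permM tx -!permM -!expgD addnC.
Qed.

End FullCycle.

Lemma Stab_relE n (p : profile n) (psi : {perm agent n}) : psi \in Stab p ->
  forall z a b, ((psi a, psi b) \in p (psi z)) = ((a, b) \in p z).
Proof.
by rewrite inE => /andP[_ /eqP pE] z a b; rewrite -{1}pE ffunE inE /= !permK.
Qed.

Lemma Rank_bottom n (X : {set agent n}) (R : relI n) a :
  R \subset setX X X -> (forall b, b \in X -> (b, a) \in R) -> Rank R a = #|X|.
Proof.
move=> RX Xa; apply: eq_card => b; rewrite inE.
by apply/idP/idP => [/(subsetP RX)/setXP[] | /Xa].
Qed.

Lemma MsetC n : Mset n = ~: Wset n.
Proof. by apply/setP => a; rewrite !inE leqNgt. Qed.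

Section SidePerm.
Variables (n : nat) (s : {perm agent n}) (c : bool).
Hypothesis s_side : forall a, (s a \in Wset n) = (a \in Wset n) (+) c.

Lemma imset_Wset_side : s @: Wset n = if c then Mset n else Wset n.
Proof.
rewrite (can_imset_pre _ (permK s)); apply/setP => a.
rewrite in_set; have := s_side (s^-1%g a); rewrite permKV MsetC.
by case: c => E; rewrite ?in_setC E ?addbT ?addbF ?negbK.
Qed.

Lemma Gstar_side : s \in Gstar n.
Proof.
have sM : s @: Mset n = if c then Wset n else Mset n.
  rewrite MsetC !(can_imset_pre _ (permK s)) preimsetC.
  rewrite -(can_imset_pre _ (permK s)).
  by rewrite imset_Wset_side MsetC; case: c; rewrite ?setCK.
by rewrite inE imset_Wset_side sM; case: c; rewrite // setUC.
Qed.

End SidePerm.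

Section Zigzag.
Variable n : nat.
Implicit Types (a b z : agent n) (m d : nat).

Fact pos_subproof a : (if a < n then 2 * a else (2 * (a - n)).+1) < 2 * n.
Proof. by have := ltn_ord a; case: ifP; lia. Qed.

Definition pos a : agent n := Ordinal (pos_subproof a).

Lemma pos_inj : injective pos.
Proof.
move=> a b /(congr1 val) /=; have := ltn_ord a; have := ltn_ord b.
by case: ifP; case: ifP => ? ? ? ? ?; apply: ord_inj; lia.
Qed.

Lemma odd_pos a : odd (pos a) = (a \notin Wset n).
Proof. by rewrite inE /=; case: ifP; rewrite /= ?oddM. Qed.

Definition shift : {perm agent n} := perm (@ordS_inj (2 * n)).

Lemma shiftX m i : (shift ^+ m)%g i = (i + m) %% (2 * n) :> nat.
Proof.
elim: m => [|m IH]; first by rewrite expg0 perm1 addn0 modn_small.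
by rewrite expgSr permM permE /= IH -addn1 modnDml addn1 addnS.
Qed.

(* cyc a = pos^-1 (pos a + 1 mod 2n) *)
Definition cyc : {perm agent n} := (shift ^ (perm pos_inj)^-1)%g.

Lemma pos_cycX m a : pos ((cyc ^+ m)%g a) = (pos a + m) %% (2 * n) :> nat.
Proof.
rewrite /cyc -conjXg -{1}(permK (perm pos_inj) a) permJ -(permE pos_inj).
by rewrite permKV shiftX permE.
Qed.

Definition off a b : nat := (pos b + 2 * n - pos a) %% (2 * n).

Lemma ltn_off a b : off a b < 2 * n.
Proof. by rewrite ltn_mod; have := ltn_ord a; lia. Qed.

Lemma pos_off a b : (pos a + off a b) %% (2 * n) = pos b.
Proof.
have := ltn_ord (pos a); have := ltn_ord (pos b) => ? ?.
rewrite modnDmr (_ : pos a + _ = pos b + 2 * n); last by lia.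
by rewrite modnDr modn_small.
Qed.

Lemma off_unique a b d :
  d < 2 * n -> (pos a + d) %% (2 * n) = pos b -> off a b = d.
Proof.
move=> lt_d_2n; rewrite -(pos_off a b) => /eqP.
by rewrite eqn_modDl !modn_small ?ltn_off // => /eqP.
Qed.

Lemma off_inj z : injective (off z).
Proof.
by move=> b c e; apply/pos_inj/ord_inj; rewrite -(pos_off z b) -(pos_off z c) e.
Qed.

Lemma cycX_off a b : (cyc ^+ off a b)%g a = b.
Proof. by apply/pos_inj/ord_inj; rewrite pos_cycX pos_off. Qed.

Lemma off_cycX m a b : off ((cyc ^+ m)%g a) ((cyc ^+ m)%g b) = off a b.
Proof.
apply: off_unique; first exact: ltn_off.
by rewrite !pos_cycX modnDml -addnA [m + _]addnC addnA -modnDml pos_off.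
Qed.

Lemma off_cycXr m a : off a ((cyc ^+ m)%g a) = m %% (2 * n).
Proof.
apply: off_unique; last by rewrite pos_cycX modnDmr.
by rewrite ltn_mod; have := ltn_ord a; lia.
Qed.

Lemma odd_off a b : odd (off a b) = (a \in Wset n) (+) (b \in Wset n).
Proof.
have := congr1 odd (pos_off a b); rewrite odd_mod ?oddM // oddD !odd_pos.
by case: (a \in _); case: (b \in _); case: odd.
Qed.

Lemma Wset_cycX m a : ((cyc ^+ m)%g a \in Wset n) = (a \in Wset n) (+) odd m.
Proof.
apply: negb_inj; rewrite -odd_pos pos_cycX odd_mod ?oddM // oddD odd_pos.
by case: (a \in _); case: odd.
Qed.

Lemma cycX_Gstar m : (cyc ^+ m)%g \in Gstar n.
Proof. exact: Gstar_side (Wset_cycX m). Qed.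

Lemma card_Mset : #|Mset n| = #|Wset n|.
Proof.
rewrite -[RHS](card_imset _ (@perm_inj _ (cyc ^+ 1)%g)).
by rewrite (imset_Wset_side (Wset_cycX 1)).
Qed.

Lemma card_Wset : #|Wset n| = n.
Proof. by have := cardsC (Wset n); rewrite -MsetC card_Mset card_ord; lia. Qed.

Lemma full_cyc z : porbit cyc z = setT.
Proof.
apply/setP => a; rewrite inE; apply/porbitP.
by exists (off z a); rewrite cycX_off.
Qed.

Definition key d := if d == n then 2 * n else d.

Lemma leq_key d : d <= key d.
Proof. by rewrite /key; case: eqP; lia. Qed.

Lemma key_le d : d < 2 * n -> key d <= 2 * n.
Proof. by rewrite /key; case: eqP; lia. Qed.

Lemma key_inj d1 d2 : d1 < 2 * n -> d2 < 2 * n -> key d1 = key d2 -> d1 = d2.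
Proof. by rewrite /key; case: eqP; case: eqP; lia. Qed.

Definition prof : profile n :=
  [ffun z => [set bc | [&& odd (off z bc.1), odd (off z bc.2)
                         & key (off z bc.1) <= key (off z bc.2)]]].

Lemma in_prof z b c : ((b, c) \in prof z) =
  [&& odd (off z b), odd (off z c) & key (off z b) <= key (off z c)].
Proof. by rewrite ffunE inE. Qed.

Lemma set_odd_off z :
  [set b | odd (off z b)] = if z \in Wset n then Mset n else Wset n.
Proof.
apply/setP => b; rewrite inE odd_off MsetC.
by case: (z \in _); rewrite ?in_setC.
Qed.

Lemma prof_linear z : linear_order_on [set b | odd (off z b)] (prof z).
Proof.
split.
- apply/subsetP => -[b c]; rewrite in_prof => /and3P[ob oc _].
  by rewrite !inE ob oc.
- by move=> b; rewrite inE in_prof => ->; rewrite leqnn.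
- move=> b c; rewrite !in_prof => /and3P[_ _ le_bc] /and3P[_ _ le_cb].
  apply: (@off_inj z b c); apply: key_inj; rewrite ?ltn_off //.
  by apply/eqP; rewrite eqn_leq le_bc.
- move=> b c d; rewrite !in_prof => /and3P[-> _ le_bc] /and3P[_ -> le_cd].
  exact: leq_trans le_cd.
- by move=> b c; rewrite !inE !in_prof => -> ->; exact: leq_total.
Qed.

Lemma prof_is_profile : is_profile prof.
Proof.
split=> z; last rewrite MsetC inE => /negbTE.
all: by move=> zW; have := prof_linear z; rewrite set_odd_off zW.
Qed.

Lemma cycX_Stab m : (cyc ^+ m)%g \in Stab prof.
Proof.
have offV a b : off ((cyc ^+ m)^-1%g a) ((cyc ^+ m)^-1%g b) = off a b.
  by rewrite -(off_cycX m) !permKV.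
rewrite inE cycX_Gstar; apply/eqP/ffunP => z; apply/setP => -[b c].
by rewrite !ffunE !inE /= !offV.
Qed.

Section TwoSided.
Hypothesis n_gt1 : 1 < n.

Lemma off_cyc z : off z (cyc z) = 1.
Proof. by rewrite -[cyc]expg1 off_cycXr modn_small //; lia. Qed.

Lemma key1 : key 1 = 1.
Proof. by rewrite /key; case: eqP => //; lia. Qed.

Lemma prof_cyc_first z b : odd (off z b) -> (cyc z, b) \in prof z.
Proof.
move=> ob; rewrite in_prof off_cyc ob key1 /=.
by apply: leq_trans (leq_key _); move: ob; case: (off z b).
Qed.

Lemma prof_cyc_top z c : ((c, cyc z) \in prof z) = (c == cyc z).
Proof.
apply/idP/eqP => [|->]; last by apply: prof_cyc_first; rewrite off_cyc.
rewrite in_prof off_cyc key1 => /and3P[oc _ le_c1]; apply: (@off_inj z).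
rewrite off_cyc; have := leq_trans (leq_key _) le_c1.
by move: oc; case: (off z c) => [|[]].
Qed.

Lemma Stab_commute psi : psi \in Stab prof -> commute psi cyc.
Proof.
move=> Spsi; apply/permP => z; rewrite [LHS]permM [RHS]permM.
have top : (psi (cyc z), psi (cyc z)) \in prof (psi z).
  by rewrite (Stab_relE Spsi) prof_cyc_top.
have : (cyc (psi z), psi (cyc z)) \in prof (psi z).
  by apply: prof_cyc_first; move: top; rewrite in_prof => /andP[].
rewrite -{1}(permKV psi (cyc (psi z))) (Stab_relE Spsi) prof_cyc_top.
by move=> /eqP <-; rewrite permKV.
Qed.

Lemma Stab_prof : Stab prof = <[cyc]>%g.
Proof.
have z0 : agent n by exists 0; lia.
apply/eqP; rewrite eqEsubset; apply/andP; split; apply/subsetP.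
  by move=> psi /Stab_commute; apply: (commute_full_cycle (full_cyc z0)).
by move=> _ /cycleP[m ->]; exact: cycX_Stab.
Qed.
End TwoSided.

Lemma Rank_prof_opposite z : odd n -> Rank (prof z) ((cyc ^+ n)%g z) = n.
Proof.
move=> n_odd; have [RX _ _ _ _] := prof_linear z.
rewrite (Rank_bottom RX) => [|b].
  by rewrite set_odd_off; case: ifP; rewrite ?card_Mset card_Wset.
rewrite inE in_prof off_cycXr modn_small; last by have := odd_gt0 n_odd; lia.
by move=> ->; rewrite n_odd {2}/key eqxx key_le ?ltn_off.
Qed.
End Zigzag.

Theorem proposition17 (n : nat) (hn : (2 <= n)%N) (hodd : odd n) :
  exists (p : profile n) (phi : {perm agent n}),
    [/\ is_profile p,
        phi \in Gstar n,
        is_kcycle (2 * n) phi,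
        Stab p = <[phi]>%g &
        forall z : agent n, Rank (p z) ((phi ^+ n)%g z) = n].
Proof.
have z0 : agent n by exists 0; lia.
exists (prof n), (cyc n); split.
- exact: prof_is_profile.
- by rewrite -[cyc n]expg1 cycX_Gstar.
- by have := full_cycle_kcycle (full_cyc z0); rewrite card_ord.
- exact: Stab_prof.
- by move=> z; apply: Rank_prof_opposite.
Qed.
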